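(* Let $n\ge3$ and let $A_1,\dots,A_n$ be events in a probability space. Then \[ \Pr\Big(\bigcup_{i=1}^n A_i\Big) \ge \frac{1}{n-2}\Big(\sum_{i=1}^n\Pr(A_i) - \frac{2n-3}{\binom n2}\sum_{1\le i<j\le n}\Pr(A_i\cap A_j) + \frac{3}{\binom n2}\sum_{1\le i<j<k\le n}\Pr(A_i\cap A_j\cap A_k)\Big). \] *)

From Stdlib Require Import Reals.
Open Scope R_scope.

Record prob_space (Omega : Type) := {
  measurable : (Omega -> Prop) -> Prop;
  meas_full : measurable (fun _ => True);
  meas_compl : forall A, measurable A -> measurable (fun w => ~ A w);
  meas_cunion : forall F : nat -> (Omega -> Prop),
      (forall k, measurable (F k)) -> measurable (fun w => exists k, F k w);
  pr : (Omega -> Prop) -> R;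
  pr_nonneg : forall A, measurable A -> 0 <= pr A;
  pr_full : pr (fun _ => True) = 1;
  pr_sigma_additive : forall F : nat -> (Omega -> Prop),
      (forall k, measurable (F k)) ->
      (forall i j w, i <> j -> F i w -> F j w -> False) ->
      infinite_sum (fun k => pr (F k)) (pr (fun w => exists k, F k w))
}.

Arguments measurable {Omega} _ _.
Arguments pr {Omega} _ _.

Fixpoint sumR (n : nat) (f : nat -> R) : R :=
  match n with
  | O => 0
  | S m => sumR m f + f m
  end.

From Stdlib Require Import Reals Lra Lia Classical FunctionalExtensionality PropExtensionality Factorial.
Open Scope R_scope.

(* Let N(w) be the number of events A_i containing w.  For every k, the k-th
   Bonferroni sum S_k = sum_{i_1 < ... < i_k} Pr(A_{i_1} /\ ... /\ A_{i_k})
   equals sum_c C(c, k) Pr(N = c), the expectation of C(N, k).  Hence the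
   right-hand side is sum_c f(c) Pr(N = c) for the cubic
   f(c) = (c - (2n-3) C(c,2) / C(n,2) + 3 C(c,3) / C(n,2)) / (n-2), while the
   left-hand side is sum_{c >= 1} Pr(N = c).  It remains that f(0) = 0 and that
   f(c) <= 1 for the integers 1 <= c <= n, which follows from
   n(n-1)(n-2) (1 - f(c)) = n(n-1)(n-3) - (c-1)(n-c)(n-c-1). *)

Lemma sumR_ext n f g : (forall i, (i < n)%nat -> f i = g i) -> sumR n f = sumR n g.
Proof.
  induction n as [|n IH]; intros Hfg; simpl; [reflexivity|].
  rewrite IH by (intros; apply Hfg; lia). rewrite Hfg by lia. reflexivity.
Qed.

Lemma sumR_succ_l n f : sumR (S n) f = f 0%nat + sumR n (fun i => f (S i)).
Proof. induction n as [|n IH]; simpl in *; [ring|]. rewrite IH; ring. Qed.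

Lemma sumR_add n f g : sumR n (fun i => f i + g i) = sumR n f + sumR n g.
Proof. induction n as [|n IH]; simpl; [ring|]. rewrite IH; ring. Qed.

Lemma sumR_scal n a f : sumR n (fun i => a * f i) = a * sumR n f.
Proof. induction n as [|n IH]; simpl; [ring|]. rewrite IH; ring. Qed.

Lemma sumR_comb3 n s a b f1 f2 f3 :
  s * (sumR n f1 - a * sumR n f2 + b * sumR n f3) =
  sumR n (fun i => s * (f1 i - a * f2 i + b * f3 i)).
Proof. induction n as [|n IH]; simpl; [ring|]. rewrite <- IH; ring. Qed.

Lemma sumR_le n f g : (forall i, (i < n)%nat -> f i <= g i) -> sumR n f <= sumR n g.
Proof.
  induction n as [|n IH]; intros Hfg; simpl; [lra|].
  assert (f n <= g n) by (apply Hfg; lia).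
  assert (sumR n f <= sumR n g) by (apply IH; intros; apply Hfg; lia).
  lra.
Qed.

(* Summation by parts for weights obeying Pascal's rule; on the left, y is
   shifted by one place. *)
Lemma sumR_pascal n (w' w x y : nat -> R) :
  (forall c, w' (S c) = w' c + w c) -> x (S n) = 0 ->
  sumR (S (S n)) (fun c => w' c * (x c + match c with O => 0 | S c' => y c' end)) =
  sumR (S n) (fun c => w' c * (x c + y c)) + sumR (S n) (fun c => w c * y c).
Proof.
  intros Hpascal Hx.
  rewrite (sumR_ext (S (S n)) _ (fun c => w' c * x c
             + w' c * match c with O => 0 | S c' => y c' end)) by (intros; ring).
  rewrite sumR_add, sumR_succ_l with (f := fun c => w' c * match c with O => 0 | S c' => y c' end).
  rewrite (sumR_ext (S n) (fun c => w' (S c) * y c) (fun c => w' c * y c + w c * y c))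
    by (intros; rewrite Hpascal; ring).
  rewrite (sumR_ext (S n) (fun c => w' c * (x c + y c)) (fun c => w' c * x c + w' c * y c))
    by (intros; ring).
  rewrite !sumR_add. cbn [sumR]. rewrite Hx. ring.
Qed.

(* The binomial coefficient C(c, k) as a real, defined by Pascal's rule
   (unlike [C], it is 0 for k > c). *)
Fixpoint binR (c k : nat) : R :=
  match c with
  | O => match k with O => 1 | S _ => 0 end
  | S c' => binR c' k + match k with O => 0 | S k' => binR c' k' end
  end.

Lemma binR_0 c : binR c 0 = 1.
Proof. induction c as [|c IH]; simpl; [|rewrite IH]; ring. Qed.

Lemma binR_1 c : binR c 1 = INR c.
Proof. induction c as [|c IH]; simpl binR; [simpl; ring|]. rewrite IH, binR_0, S_INR; ring. Qed.

Lemma binR_2 c : binR c 2 = INR c * (INR c - 1) / 2.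
Proof. induction c as [|c IH]; simpl binR; [simpl; field|]. rewrite IH, binR_1, S_INR; field. Qed.

Lemma binR_3 c : binR c 3 = INR c * (INR c - 1) * (INR c - 2) / 6.
Proof. induction c as [|c IH]; simpl binR; [simpl; field|]. rewrite IH, binR_2, S_INR; field. Qed.

Lemma C_2 n : (2 <= n)%nat -> C n 2 = INR n * (INR n - 1) / 2.
Proof.
  intros Hn. destruct n as [|[|p]]; try lia. unfold C.
  replace (S (S p) - 2)%nat with p by lia.
  rewrite !fact_simpl, !mult_INR. simpl (fact 2).
  pose proof (INR_fact_neq_0 p). rewrite !S_INR. simpl INR. field. auto.
Qed.

Lemma INR_0_or_ge_1 m : INR m = 0 \/ 1 <= INR m.
Proof. destruct m; [left; reflexivity|right; apply (le_INR 1); lia]. Qed.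

(* Integrality matters: for reals the inequality fails at a = 1/2, b = 3/2. *)
Lemma cubic_gap (a b : nat) : (2 <= a + b)%nat ->
  INR a * INR b * (INR b - 1) <= (INR a + INR b + 1) * (INR a + INR b) * (INR a + INR b - 2).
Proof.
  intros Hab. apply le_INR in Hab. rewrite plus_INR in Hab.
  destruct (INR_0_or_ge_1 a) as [Ha|Ha], (INR_0_or_ge_1 b) as [Hb|Hb];
    set (x := INR a) in *; set (y := INR b) in *; simpl in Hab.
  - lra.
  - rewrite Ha. nra.
  - rewrite Hb. nra.
  - assert (x * y <= (x + y + 1) * (x + y)) by nra.
    apply Rmult_le_compat; nra.
Qed.

Lemma bonferroni_weight_le n c : (3 <= n)%nat -> (1 <= c <= n)%nat ->
  / (INR n - 2) * (binR c 1 - (2 * INR n - 3) / C n 2 * binR c 2 + 3 / C n 2 * binR c 3) <= 1.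
Proof.
  intros Hn Hc. destruct c as [|a]; [lia|].
  destruct (Nat.le_exists_sub (S a) n (proj2 Hc)) as [b [-> _]].
  pose proof (cubic_gap a b ltac:(lia)) as Hgap.
  rewrite C_2, binR_1, binR_2, binR_3, plus_INR, S_INR by lia.
  pose proof (pos_INR a); pose proof (pos_INR b).
  assert (HN : 3 <= INR b + (INR a + 1)).
  { rewrite <- S_INR, <- plus_INR. replace 3 with (INR 3) by (simpl; ring). apply le_INR, Hn. }
  set (x := INR a) in *; set (y := INR b) in *.
  set (N := y + (x + 1)).
  assert (HD : 0 < N * (N - 1) * (N - 2)) by (unfold N; apply Rmult_lt_0_compat; [apply Rmult_lt_0_compat|]; lra).
  replace (/ (N - 2) * ((x + 1) - (2 * N - 3) / (N * (N - 1) / 2) * ((x + 1) * ((x + 1) - 1) / 2)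
           + 3 / (N * (N - 1) / 2) * ((x + 1) * ((x + 1) - 1) * ((x + 1) - 2) / 6)))
    with (1 - (N * (N - 1) * (N - 3) - x * y * (y - 1)) / (N * (N - 1) * (N - 2)))
    by (unfold N; field; repeat split; lra).
  assert (0 <= (N * (N - 1) * (N - 3) - x * y * (y - 1)) / (N * (N - 1) * (N - 2))).
  { apply Rmult_le_pos; [|left; apply Rinv_0_lt_compat, HD]. unfold N. nra. }
  lra.
Qed.

Lemma pred_ext (Omega : Type) (X Y : Omega -> Prop) : (forall w, X w <-> Y w) -> X = Y.
Proof. intros H; apply functional_extensionality; intro w; apply propositional_extensionality, H. Qed.

Section Probability.
Variable Omega : Type.
Variable P : prob_space Omega.

Lemma measurable_empty : measurable P (fun _ => False).
Proof.
  replace (fun _ : Omega => False) with (fun _ : Omega => ~ True) by (apply pred_ext; tauto).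
  apply meas_compl, meas_full.
Qed.

Lemma measurable_or X Y : measurable P X -> measurable P Y -> measurable P (fun w => X w \/ Y w).
Proof.
  intros HX HY.
  replace (fun w => X w \/ Y w) with (fun w => exists k, (match k with O => X | _ => Y end) w).
  - apply meas_cunion. intros [|k]; assumption.
  - apply pred_ext. intros w; split.
    + intros [[|k] Hk]; auto.
    + intros [H|H]; [exists O | exists 1%nat]; exact H.
Qed.

Lemma measurable_and X Y : measurable P X -> measurable P Y -> measurable P (fun w => X w /\ Y w).
Proof.
  intros HX HY.
  replace (fun w => X w /\ Y w) with (fun w => ~ (~ X w \/ ~ Y w)).
  - apply meas_compl, measurable_or; apply meas_compl; assumption.
  - apply pred_ext. intros w. tauto.
Qed.

Lemma measurable_guard (Q : Prop) X : (Q -> measurable P X) -> measurable P (fun w => Q /\ X w).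
Proof.
  intros HX. destruct (classic Q) as [HQ|HQ].
  - replace (fun w => Q /\ X w) with X by (apply pred_ext; tauto). auto.
  - replace (fun w => Q /\ X w) with (fun _ : Omega => False) by (apply pred_ext; tauto).
    apply measurable_empty.
Qed.

Lemma pr_ext X Y : (forall w, X w <-> Y w) -> pr P X = pr P Y.
Proof. intros H. f_equal. apply pred_ext, H. Qed.

(* The empty event has probability p with p + p + ... = p, whence p = 0. *)
Lemma pr_empty : pr P (fun _ => False) = 0.
Proof.
  pose proof (pr_sigma_additive _ P (fun _ _ => False) (fun _ => measurable_empty)
                (fun _ _ _ _ H _ => H)) as Hsum. cbv beta in Hsum.
  rewrite (pr_ext (fun w => exists _ : nat, False) (fun _ => False)) in Hsum by firstorder.
  set (p := pr P (fun _ => False)) in *.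
  destruct (Req_dec p 0) as [|Hp]; [assumption|exfalso].
  destruct (Hsum (Rabs p) (Rabs_pos_lt p Hp)) as [N HN].
  specialize (HN (S N) (le_S _ _ (le_n N))).
  unfold Rdist in HN. rewrite sum_cte in HN.
  replace (p * INR (S (S N)) - p) with (INR (S N) * p) in HN by (rewrite (S_INR (S N)); ring).
  rewrite Rabs_mult, (Rabs_right (INR (S N))) in HN by (apply Rle_ge, pos_INR).
  assert (1 <= INR (S N)) by (rewrite S_INR; pose proof (pos_INR N); lra).
  pose proof (Rabs_pos_lt p Hp). nra.
Qed.

Lemma pr_union_disjoint X Y : measurable P X -> measurable P Y ->
  (forall w, X w -> Y w -> False) ->
  pr P (fun w => X w \/ Y w) = pr P X + pr P Y.
Proof.
  intros HX HY Hdisj.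
  set (F := fun k : nat => match k with O => X | 1%nat => Y | _ => fun _ : Omega => False end).
  assert (HF : forall k, measurable P (F k)) by (intros [|[|k]]; simpl; auto using measurable_empty).
  assert (HFdisj : forall i j w, i <> j -> F i w -> F j w -> False).
  { intros [|[|i]] [|[|j]] w Hij Hi Hj; simpl in *; eauto. }
  pose proof (pr_sigma_additive _ P F HF HFdisj) as Hsum.
  rewrite (pr_ext (fun w => exists k, F k w) (fun w => X w \/ Y w)) in Hsum.
  2:{ intros w; split.
      - intros [[|[|k]] Hk]; simpl in Hk; tauto.
      - intros [H|H]; [exists O | exists 1%nat]; exact H. }
  apply (uniqueness_sum _ _ _ Hsum).
  assert (Hpartial : forall N, (1 <= N)%nat -> sum_f_R0 (fun k => pr P (F k)) N = pr P X + pr P Y).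
  { induction N as [|N IH]; intros HN; [lia|]. destruct N; [reflexivity|].
    rewrite tech5, IH by lia. simpl F. rewrite pr_empty. ring. }
  intros eps Heps. exists 1%nat. intros N HN.
  rewrite Hpartial by exact HN. unfold Rdist. rewrite Rminus_diag, Rabs_R0. exact Heps.
Qed.

Lemma pr_split X B : measurable P X -> measurable P B ->
  pr P X = pr P (fun w => X w /\ ~ B w) + pr P (fun w => X w /\ B w).
Proof.
  intros HX HB. rewrite <- pr_union_disjoint.
  - apply pr_ext. intros w. destruct (classic (B w)); tauto.
  - apply measurable_and, meas_compl; assumption.
  - apply measurable_and; assumption.
  - intros w; tauto.
Qed.

End Probability.

Section Counting.
Variable Omega : Type.
Variable P : prob_space Omega.
Variable A : nat -> Omega -> Prop.

Fixpoint exactly (m c : nat) (w : Omega) : Prop :=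
  match m with
  | O => c = O
  | S m' => (~ A m' w /\ exactly m' c w)
            \/ (A m' w /\ match c with O => False | S c' => exactly m' c' w end)
  end.

Lemma exactly_gt m c w : (m < c)%nat -> ~ exactly m c w.
Proof.
  revert c. induction m as [|m IH]; simpl; intros c Hc.
  - lia.
  - intros [[_ H]|[_ H]]; [exact (IH c ltac:(lia) H)|].
    destruct c as [|c]; [exact H|exact (IH c ltac:(lia) H)].
Qed.

Lemma exactly_S_exists m c w : exactly m (S c) w -> exists i, (i < m)%nat /\ A i w.
Proof.
  revert c. induction m as [|m IH]; simpl; intros c H; [discriminate|].
  destruct H as [[_ H]|[HA _]].
  - destruct (IH c H) as [i [Hi HAi]]. exists i; split; [lia|exact HAi].
  - exists m; split; [lia|exact HA].
Qed.

Lemma measurable_exactly m : (forall i, (i < m)%nat -> measurable P (A i)) ->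
  forall c, measurable P (exactly m c).
Proof.
  induction m as [|m IH]; intros HA c.
  - replace (exactly 0 c) with (fun _ : Omega => c = O /\ True) by (apply pred_ext; simpl; tauto).
    apply measurable_guard. intros; apply meas_full.
  - assert (HAm : measurable P (A m)) by (apply HA; lia).
    assert (IH' : forall c, measurable P (exactly m c)) by (apply IH; intros; apply HA; lia).
    apply measurable_or; apply measurable_and; auto using meas_compl.
    destruct c; auto using measurable_empty.
Qed.

Lemma pr_exactly_S m c E :
  measurable P (A m) -> (forall c, measurable P (exactly m c)) -> measurable P E ->
  pr P (fun w => E w /\ exactly (S m) c w) =
  pr P (fun w => (E w /\ ~ A m w) /\ exactly m c w)
  + match c with O => 0 | S c' => pr P (fun w => (A m w /\ E w) /\ exactly m c' w) end.
Proof.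
  intros HAm Hex HE. destruct c as [|c].
  - rewrite Rplus_0_r. apply pr_ext. simpl. tauto.
  - rewrite <- pr_union_disjoint.
    + apply pr_ext. simpl. tauto.
    + repeat apply measurable_and; auto using meas_compl.
    + repeat apply measurable_and; auto.
    + intros w; tauto.
Qed.

(* [inter_sum k m E] is the sum, over i_1 < ... < i_k < m, of
   Pr(A i_1 /\ ... /\ A i_k /\ E). *)
Fixpoint inter_sum (k m : nat) (E : Omega -> Prop) : R :=
  match k with
  | O => pr P E
  | S k' => sumR m (fun j => inter_sum k' j (fun w => A j w /\ E w))
  end.

Lemma inter_sum_binR m : (forall i, (i < m)%nat -> measurable P (A i)) ->
  forall k E, measurable P E ->
  inter_sum k m E = sumR (S m) (fun c => binR c k * pr P (fun w => E w /\ exactly m c w)).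
Proof.
  induction m as [|m IH]; intros HA k E HE.
  - simpl sumR. rewrite (pr_ext _ P (fun w => E w /\ O = O) E) by tauto.
    destruct k; simpl; ring.
  - assert (HAm : measurable P (A m)) by (apply HA; lia).
    assert (HAlt : forall i, (i < m)%nat -> measurable P (A i)) by (intros; apply HA; lia).
    assert (Hex := measurable_exactly m HAlt).
    rewrite (sumR_ext (S (S m)) _ (fun c => binR c k *
        (pr P (fun w => (E w /\ ~ A m w) /\ exactly m c w)
         + match c with O => 0 | S c' => pr P (fun w => (A m w /\ E w) /\ exactly m c' w) end)))
      by (intros; rewrite pr_exactly_S by assumption; reflexivity).
    rewrite (sumR_pascal m (fun c => binR c k) (fun c => match k with O => 0 | S k' => binR c k' end)).
    2:{ intros c; reflexivity. }
    2:{ rewrite <- (pr_empty _ P). apply pr_ext.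
        intros w; pose proof (exactly_gt m (S m) w (le_n _)); tauto. }
    rewrite (sumR_ext (S m) (fun c => binR c k * _) (fun c => binR c k * pr P (fun w => E w /\ exactly m c w))).
    2:{ intros c _. rewrite (pr_split _ P (fun w => E w /\ exactly m c w) (A m)) by (auto using measurable_and).
        f_equal. f_equal; apply pr_ext; tauto. }
    rewrite <- IH by assumption.
    destruct k as [|k].
    + rewrite sumR_scal. simpl. ring.
    + rewrite <- IH by auto using measurable_and. reflexivity.
Qed.

Lemma inter_sum_1 n : inter_sum 1 n (fun _ => True) = sumR n (fun i => pr P (A i)).
Proof. apply sumR_ext. intros i _. apply pr_ext. tauto. Qed.

Lemma inter_sum_2 n : inter_sum 2 n (fun _ => True) =
  sumR n (fun j => sumR j (fun i => pr P (fun w => A i w /\ A j w))).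
Proof. apply sumR_ext. intros j _. apply sumR_ext. intros i _. apply pr_ext. tauto. Qed.

Lemma inter_sum_3 n : inter_sum 3 n (fun _ => True) =
  sumR n (fun k => sumR k (fun j => sumR j (fun i => pr P (fun w => A i w /\ A j w /\ A k w)))).
Proof.
  apply sumR_ext. intros k _. apply sumR_ext. intros j _. apply sumR_ext. intros i _.
  apply pr_ext. tauto.
Qed.

End Counting.

Theorem corollary4 (Omega : Type) (P : prob_space Omega) (n : nat)
  (hn : (3 <= n)%nat) (A : nat -> (Omega -> Prop))
  (hA : forall i, (i < n)%nat -> measurable P (A i)) :
  pr P (fun w => exists i, (i < n)%nat /\ A i w) >=
  / (INR n - 2) *
  ( sumR n (fun i => pr P (A i))
    - (2 * INR n - 3) / C n 2 *
        sumR n (fun j => sumR j (fun i => pr P (fun w => A i w /\ A j w)))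
    + 3 / C n 2 *
        sumR n (fun k => sumR k (fun j => sumR j (fun i =>
            pr P (fun w => A i w /\ A j w /\ A k w))))).
Proof.
  set (U := fun w => exists i, (i < n)%nat /\ A i w).
  assert (MU : measurable P U) by (apply meas_cunion; intros i; apply measurable_guard, hA).
  assert (MT : measurable P (fun _ => True)) by apply meas_full.
  change (pr P U) with (inter_sum Omega P A 0 n U).
  rewrite <- inter_sum_1, <- inter_sum_2, <- inter_sum_3, !(inter_sum_binR _ P A n hA) by assumption.
  rewrite sumR_comb3. apply Rle_ge, sumR_le. intros c Hc.
  rewrite binR_0, Rmult_1_l.
  set (p := pr P (fun w => True /\ exactly Omega A n c w)).
  replace (_ * (binR c 1 * p - _ * (binR c 2 * p) + _ * (binR c 3 * p)))
    with (/ (INR n - 2) * (binR c 1 - (2 * INR n - 3) / C n 2 * binR c 2 + 3 / C n 2 * binR c 3) * p)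
    by ring.
  destruct c as [|c].
  - simpl binR. rewrite Rminus_0_l. ring_simplify.
    apply pr_nonneg, measurable_and, measurable_exactly; assumption.
  - replace (pr P (fun w => U w /\ exactly Omega A n (S c) w)) with p.
    2:{ apply pr_ext. intros w. pose proof (exactly_S_exists Omega A n c w). unfold U. tauto. }
    rewrite <- (Rmult_1_l p) at 2.
    apply Rmult_le_compat_r.
    + apply pr_nonneg, measurable_and, measurable_exactly; assumption.
    + apply bonferroni_weight_le; lia.
Qed.
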